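(* Let $\mathsf{G}$ be a connected undirected graph on $N=\{1,\dots,n\}$ with edge set $E$ and symmetric positive edge weights $w_{ij}=w_{ji}>0$ for $\{i,j\}\in E$, and let $\mathbf{L}$ be its Laplacian, so that the symmetric irreducible consensus system reads $\dot x_i=\sum_{j:\{i,j\}\in E}w_{ij}(x_j-x_i)$, i.e. $\dot{\bm{x}}=-\mathbf{L}\bm{x}$. Fix $\alpha>0$ and let $M(\alpha)=\{\bm{x}\in\mathbb{R}^n_{>0}:\ \frac1n\sum_{i=1}^n x_i=\alpha\}$. For $\bm{x}\in M(\alpha)$ set $\bm{\rho}=\bm{x}/\alpha$. Let $H:\mathbb{R}_{>0}\to\mathbb{R}$ be a strictly convex $C^2$ function with $H''>0$, write $h=H'$, and let $$V(\bm{x})=\alpha\sum_{i=1}^n H(\rho_i)=\alpha\sum_{i=1}^n H(x_i/\alpha).$$ For $a,b>0$ define $K_h(a,b)=\dfrac{a-b}{h(a)-h(b)}$ if $a\neq b$ and $K_h(a,a)=1/H''(a)$. Define the $n\times n$ matrix $\mathbf{G}^{-1}(\bm{x})$ by $[\mathbf{G}^{-1}(\bm{x})]_{ij}=-\alpha\,w_{ij}K_h(\rho_i,\rho_j)$ for $\{i,j\}\in E$, $[\mathbf{G}^{-1}(\bm{x})]_{ij}=0$ for $i\ne j$ with $\{i,j\}\notin E$, and $[\mathbf{G}^{-1}(\bm{x})]_{ii}=\sum_{j:\{i,j\}\in E}\alpha\,w_{ij}K_h(\rho_i,\rho_j)$. Then for every $\bm{x}\in M(\alpha)$, $\mathbf{G}^{-1}(\bm{x})$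 is a symmetric positive semidefinite matrix with kernel $\{c\bm{1}:c\in\mathbb{R}\}$, its entries depend continuously on $\bm{x}$, and $$-\mathbf{L}\bm{x}=-\mathbf{G}^{-1}(\bm{x})\,\nabla V(\bm{x}).$$ That is, the consensus dynamics on $M(\alpha)$ is a gradient descent flow of $V$ with respect to the (Riemannian) structure defined by $\mathbf{G}^{-1}(\cdot)$.
   Context: The Laplacian of the weighted undirected graph is $\mathbf{L}=[l_{ij}]$ with $l_{ij}=-w_{ij}$ for $\{i,j\}\in E$, $l_{ij}=0$ for other $i\ne j$, and $l_{ii}=\sum_{j:\{i,j\}\in E}w_{ij}$. The consensus value of $\bm{x}(0)\in M(\alpha)$ is $\alpha$, and $M(\alpha)$ is invariant under the dynamics. The gradient $\nabla V$ is the Euclidean gradient with respect to $\bm{x}$, so $\partial V/\partial x_i=H'(\rho_i)$. *)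

From HB Require Import structures.
From mathcomp Require Import all_boot all_order all_algebra.
From mathcomp Require Import all_classical all_reals all_analysis.
Set Implicit Arguments. Unset Strict Implicit. Unset Printing Implicit Defensive.
Import Order.TTheory GRing.Theory Num.Theory.
Import numFieldNormedType.Exports.
Local Open Scope ring_scope.
Local Open Scope classical_set_scope.

Section Defs.
Variables (R : realType) (n : nat).

Definition laplacian (e : rel 'I_n) (w : 'I_n -> 'I_n -> R) : 'M[R]_n :=
  \matrix_(i, j)
    (if i == j then \sum_(k | e i k) w i k
     else if e i j then - w i j else 0).

Definition Mset (alpha : R) : set 'cV[R]_n :=
  [set x | (forall i, 0 < x i 0) /\ (\sum_i x i 0) / n%:R = alpha].

Definition hder (H : R -> R) : R -> R := derive1 H.
Definition H2 (H : R -> R) : R -> R := derive1 (derive1 H).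

Definition Kh (H : R -> R) (a b : R) : R :=
  if a != b then (a - b) / (hder H a - hder H b) else (H2 H a)^-1.

Definition Ginv (e : rel 'I_n) (w : 'I_n -> 'I_n -> R) (H : R -> R)
  (alpha : R) (x : 'cV[R]_n) : 'M[R]_n :=
  \matrix_(i, j)
    (if i == j then \sum_(k | e i k) alpha * w i k * Kh H (x i 0 / alpha) (x k 0 / alpha)
     else if e i j then - (alpha * w i j * Kh H (x i 0 / alpha) (x j 0 / alpha))
     else 0).

Definition Vfun (H : R -> R) (alpha : R) (x : 'cV[R]_n) : R :=
  alpha * \sum_i H (x i 0 / alpha).

Definition gradV (H : R -> R) (alpha : R) (x : 'cV[R]_n) : 'cV[R]_n :=
  \col_i derive1 (fun t : R => Vfun H alpha (x + t *: delta_mx i 0)) 0.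

End Defs.

(** The Laplacian of positive symmetric weights [c] is symmetric, positive
    semidefinite, and on a connected graph its kernel is spanned by [1], because
    its quadratic form is [1/2 sum_(i,k edge) c_ik (v_i - v_k)^2].  [G^-1(x)] is
    such a Laplacian, with weights [alpha w_ij K_h(rho_i, rho_j)]; these are
    positive since [1/K_h(a, b)] is a divided difference of [h = H'], hence by
    the mean value theorem a value of [H'' > 0], and they vary continuously with
    [x] since [H''] is continuous.  Finally [dV/dx_i = h(rho_i)] and
    [K_h(a, b) (h a - h b) = a - b], so [G^-1(x) grad V(x)] has entries
    [sum_k alpha w_ik (rho_i - rho_k) = sum_k w_ik (x_i - x_k) = (L x)_i]. *)
From HB Require Import structures.
From mathcomp Require Import all_boot all_order all_algebra.
From mathcomp Require Import all_classical all_reals all_analysis.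
Import Order.TTheory GRing.Theory Num.Theory.
Import numFieldNormedType.Exports.
Local Open Scope ring_scope.
Local Open Scope classical_set_scope.
Set Implicit Arguments. Unset Strict Implicit.

Section WeightedLaplacian.
Variables (R : realType) (n : nat) (e : rel 'I_n).
Hypothesis e_irr : forall i, ~~ e i i.

Definition lapmx (c : 'I_n -> 'I_n -> R) : 'M[R]_n :=
  \matrix_(i, j) (if i == j then \sum_(k | e i k) c i k
                  else if e i j then - c i j else 0).

Definition edge_weight (c : 'I_n -> 'I_n -> R) i k := if e i k then c i k else 0.

Lemma lapmx_mulE c (v : 'cV[R]_n) i :
  (lapmx c *m v) i 0 = \sum_k edge_weight c i k * (v i 0 - v k 0).
Proof.
rewrite mxE (bigD1 i) //= mxE eqxx.
have -> : \sum_(j | j != i) lapmx c i j * v j 0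
          = - \sum_j edge_weight c i j * v j 0.
  rewrite [X in _ = - X](bigD1 i) //= /edge_weight (negbTE (e_irr i)) mul0r add0r.
  rewrite -sumrN; apply: eq_bigr => j ji; rewrite mxE eq_sym (negbTE ji).
  by case: (e i j); rewrite ?mulNr ?mul0r ?oppr0.
rewrite big_mkcond /= mulr_suml -sumrB; apply: eq_bigr => k _.
by rewrite /edge_weight; case: (e i k); rewrite ?mulrBr ?mul0r ?subrr.
Qed.

Lemma lapmx_formE c (v : 'cV[R]_n) :
  (v^T *m lapmx c *m v) 0 0 = \sum_i v i 0 * (lapmx c *m v) i 0.
Proof. by rewrite -mulmxA mxE; apply: eq_bigr => i _; rewrite mxE. Qed.

Hypothesis e_sym : forall i j, e i j = e j i.
Variable c : 'I_n -> 'I_n -> R.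
Hypothesis c_sym : forall i j, c i j = c j i.
Hypothesis c_gt0 : forall i j, e i j -> 0 < c i j.

Lemma trmx_lapmx : (lapmx c)^T = lapmx c.
Proof.
apply/matrixP => i j; rewrite !mxE eq_sym.
by case: eqP => [->|_] //; rewrite e_sym c_sym.
Qed.

Lemma edge_weight_ge0 i k : 0 <= edge_weight c i k.
Proof. by rewrite /edge_weight; case: ifP => // /c_gt0 /ltW. Qed.

Lemma edge_term_ge0 (v : 'cV[R]_n) i k :
  0 <= edge_weight c i k * (v i 0 - v k 0) ^+ 2.
Proof. by rewrite mulr_ge0 ?edge_weight_ge0 ?sqr_ge0. Qed.

(* Sum the expansion of [lapmx_mulE] once as it is and once with [i] and [k]
   exchanged. *)
Lemma lapmx_form2E (v : 'cV[R]_n) :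
  2 * (v^T *m lapmx c *m v) 0 0
  = \sum_i \sum_k edge_weight c i k * (v i 0 - v k 0) ^+ 2.
Proof.
have E1 : (v^T *m lapmx c *m v) 0 0
          = \sum_i \sum_k edge_weight c i k * (v i 0 - v k 0) * v i 0.
  rewrite lapmx_formE; apply: eq_bigr => i _.
  by rewrite lapmx_mulE mulr_sumr; apply: eq_bigr => k _; rewrite mulrC.
have E2 : (v^T *m lapmx c *m v) 0 0
          = \sum_i \sum_k edge_weight c i k * (v k 0 - v i 0) * v k 0.
  rewrite E1 exchange_big /=; apply: eq_bigr => i _; apply: eq_bigr => k _.
  by rewrite /edge_weight e_sym c_sym.
rewrite mulr2n mulrDl mul1r {1}E1 E2 -big_split /=; apply: eq_bigr => i _.
rewrite -big_split /=; apply: eq_bigr => k _.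
by rewrite -[v k 0 - v i 0]opprB mulrN mulNr -mulrBr -mulrA.
Qed.

Lemma lapmx_psd (v : 'cV[R]_n) : 0 <= (v^T *m lapmx c *m v) 0 0.
Proof.
have : 0 <= 2 * (v^T *m lapmx c *m v) 0 0.
  by rewrite lapmx_form2E; do 2![apply: sumr_ge0 => ? _]; exact: edge_term_ge0.
by rewrite pmulr_rge0.
Qed.

Lemma lapmx_ker_edge (v : 'cV[R]_n) i k :
  lapmx c *m v = 0 -> e i k -> v i 0 = v k 0.
Proof.
move=> Lv0 eik.
have : \sum_i \sum_k edge_weight c i k * (v i 0 - v k 0) ^+ 2 = 0.
  rewrite -lapmx_form2E lapmx_formE big1 ?mulr0 // => j _.
  by rewrite Lv0 mxE mulr0.
have row_ge0 j : 0 <= \sum_k edge_weight c j k * (v j 0 - v k 0) ^+ 2.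
  by apply: sumr_ge0 => l _; exact: edge_term_ge0.
move/psumr_eq0P => /(_ (fun j _ => row_ge0 j) i isT).
move/psumr_eq0P => /(_ (fun k _ => edge_term_ge0 v i k) k isT) /eqP.
rewrite /edge_weight eik mulf_eq0 (gt_eqF (c_gt0 eik)) sqrf_eq0 subr_eq0.
by move/eqP.
Qed.

Hypothesis e_connected : forall i j, connect e i j.

Lemma lapmx_ker (v : 'cV[R]_n) :
  lapmx c *m v = 0 <-> exists a : R, v = a *: const_mx 1.
Proof.
split => [Lv0|[a ->]]; last first.
  apply/matrixP => i j; rewrite (ord1 j) lapmx_mulE [RHS]mxE big1 // => k _.
  by rewrite !mxE subrr mulr0.
case: (pickP (fun _ : 'I_n => true)) => [i0 _|none]; last first.
  by exists 0; apply/matrixP => i; have := none i.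
exists (v i0 0); apply/matrixP => i j; rewrite (ord1 j) !mxE mulr1.
have v_closed : closed_mem e (mem [pred k | v k 0 == v i0 0]).
  by move=> k l ekl; rewrite !inE (lapmx_ker_edge Lv0 ekl).
have := closed_connect v_closed (e_connected i i0).
by rewrite !inE eqxx => /eqP.
Qed.

End WeightedLaplacian.

Section DividedDifference.
Variables (R : realType) (H : R -> R).
Hypothesis H'_derivable : forall a : R, 0 < a -> derivable (derive1 H) a 1.
Hypothesis H''_continuous : forall a : R, 0 < a -> {for a, continuous (H2 H)}.
Hypothesis H''_gt0 : forall a : R, 0 < a -> 0 < H2 H a.

Definition divdiff (a b : R) :=
  if a != b then (hder H a - hder H b) / (a - b) else H2 H a.

Lemma Kh_divdiff a b : Kh H a b = (divdiff a b)^-1.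
Proof. by rewrite /Kh /divdiff; case: ifP => // _; rewrite invf_div. Qed.

Lemma hder_mvt a b : 0 < a -> a < b ->
  exists2 c, a < c < b & hder H b - hder H a = H2 H c * (b - a).
Proof.
move=> a_gt0 ab; have [||c cab ->] := @MVT R (hder H) (H2 H) a b ab.
- move=> x; rewrite in_itv /= => /andP[ax _].
  by rewrite /H2 derive1E; apply/derivableP/H'_derivable/(lt_trans a_gt0).
- apply: derivable_within_continuous => x; rewrite in_itv /= => /andP[ax _].
  exact/H'_derivable/(lt_le_trans a_gt0).
- by exists c => //; move: cab; rewrite in_itv.
Qed.

Lemma divdiff_mvt a b : 0 < a -> 0 < b ->
  exists c, ((a <= c <= b) \/ (b <= c <= a)) /\ divdiff a b = H2 H c.
Proof.
move=> a_gt0 b_gt0; rewrite /divdiff; case: eqP => [<-|/eqP ab].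
  by exists a; rewrite lexx; split => //; left.
case: (ltgtP a b) ab => // ab _.
- have [c /andP[ac cb] E] := hder_mvt a_gt0 ab.
  exists c; split; first by left; rewrite !ltW.
  by rewrite -opprB E -mulrN opprB mulfK // subr_eq0 lt_eqF.
- have [c /andP[bc ca] E] := hder_mvt b_gt0 ab.
  exists c; split; first by right; rewrite !ltW.
  by rewrite E mulfK // subr_eq0 gt_eqF.
Qed.

Lemma divdiff_gt0 a b : 0 < a -> 0 < b -> 0 < divdiff a b.
Proof.
move=> a_gt0 b_gt0; have [c [cab ->]] := divdiff_mvt a_gt0 b_gt0.
by apply: H''_gt0; case: cab => /andP[+ _]; apply: lt_le_trans.
Qed.

Lemma hder_continuous a : 0 < a -> {for a, continuous (hder H)}.
Proof.
by move=> a_gt0; apply/differentiable_continuous/derivable1_diffP/H'_derivable.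
Qed.

(* Off the diagonal [divdiff] is a quotient of continuous functions; near the
   diagonal it is a value of [H''] at a point squeezed between its arguments. *)
Lemma divdiff_cvg {T} (F : set_system T) {FF : Filter F} (u v : T -> R)
  (a b : R) :
  0 < a -> 0 < b -> u @ F --> a -> v @ F --> b ->
  (fun t => divdiff (u t) (v t)) @ F --> divdiff a b.
Proof.
move=> a_gt0 b_gt0 ua vb; have [ab|ab] := eqVneq a b; last first.
  have uvab : (fun t => u t - v t) @ F --> a - b by apply: cvgB.
  have : (fun t => (hder H (u t) - hder H (v t)) / (u t - v t)) @ F
           --> divdiff a b.
    rewrite /divdiff ab; apply: cvgM; last by apply: cvgV; rewrite ?subr_eq0.
    apply: cvgB; [exact: continuous_cvg _ (hder_continuous a_gt0) ua |
                  exact: continuous_cvg _ (hder_continuous b_gt0) vb].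
  apply: cvg_trans; apply: near_eq_cvg.
  have ab_gt0 : 0 < `|a - b| by rewrite normr_gt0 subr_eq0.
  move/cvgrPdist_lt : uvab => /(_ _ ab_gt0) near_ab; near=> t.
  have : `|a - b - (u t - v t)| < `|a - b| by near: t.
  by rewrite /divdiff; case: eqP => // ->; rewrite subrr subr0 ltxx.
subst b; apply/cvgrPdist_lt => eps eps_gt0.
have /cvgrPdist_lt/(_ eps eps_gt0)/nbhs_ballP[d d_gt0 Hd] := H''_continuous a_gt0.
have md : 0 < Num.min d a by rewrite lt_min d_gt0 a_gt0.
move/cvgrPdist_lt : ua => /(_ _ md) ua; move/cvgrPdist_lt : vb => /(_ _ md) va.
near=> t.
have U : `|a - u t| < Num.min d a by near: t.
have V : `|a - v t| < Num.min d a by near: t.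
rewrite !lt_min !ltr_distlC subrr in U V.
move: U V => /andP[/andP[U1 U2] /andP[U3 _]] /andP[/andP[V1 V2] /andP[V3 _]].
have [c [cuv ->]] := divdiff_mvt U3 V3; rewrite /divdiff eqxx; apply: Hd.
rewrite /= -ball_normE /ball_ /= ltr_distlC.
case: cuv => /andP[c1 c2]; apply/andP; split.
- exact: lt_le_trans U1 c1.
- exact: le_lt_trans c2 V2.
- exact: lt_le_trans V1 c1.
- exact: le_lt_trans c2 U2.
Unshelve. all: by end_near.
Qed.

Lemma Kh_cvg {T} (F : set_system T) {FF : Filter F} (u v : T -> R) (a b : R) :
  0 < a -> 0 < b -> u @ F --> a -> v @ F --> b ->
  (fun t => Kh H (u t) (v t)) @ F --> Kh H a b.
Proof.
move=> a_gt0 b_gt0 ua vb; rewrite Kh_divdiff; under eq_cvg do rewrite Kh_divdiff.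
by apply: cvgV; [rewrite gt_eqF ?divdiff_gt0 | exact: divdiff_cvg].
Qed.

Lemma Kh_sym a b : Kh H a b = Kh H b a.
Proof.
have [->|ab] := eqVneq a b; first by [].
have ba : b != a by rewrite eq_sym.
by rewrite /Kh ab ba -(opprB b) -(opprB (hder H b)) invrN mulrNN.
Qed.

Lemma Kh_gt0 a b : 0 < a -> 0 < b -> 0 < Kh H a b.
Proof. by move=> a_gt0 b_gt0; rewrite Kh_divdiff invr_gt0 divdiff_gt0. Qed.

Lemma Kh_mul_hderB a b :
  0 < a -> 0 < b -> Kh H a b * (hder H a - hder H b) = a - b.
Proof.
move=> a_gt0 b_gt0; have [->|ab] := eqVneq a b; first by rewrite !subrr mulr0.
have := divdiff_gt0 a_gt0 b_gt0; rewrite Kh_divdiff /divdiff ab invf_div.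
move=> /gt_eqF/negbT; rewrite mulf_eq0 negb_or => /andP[hab_neq0 _].
by rewrite divfK.
Qed.

End DividedDifference.

Lemma gradVE (R : realType) (n : nat) (H : R -> R) (alpha : R) (x : 'cV[R]_n) i :
  (forall a : R, 0 < a -> derivable H a 1) ->
  0 < alpha -> 0 < x i 0 -> gradV H alpha x i 0 = hder H (x i 0 / alpha).
Proof.
move=> H_derivable alpha_gt0 xi_gt0; rewrite /gradV mxE.
set C := \sum_(k | k != i) H (x k 0 / alpha).
have -> : (fun t => Vfun H alpha (x + t *: delta_mx i 0))
          = (fun t => alpha * H ((x i 0 + t) / alpha) + alpha * C).
  apply/funext => t; rewrite /Vfun (bigD1 i) //= mulrDr !mxE eqxx /= mulr1.
  congr (_ + alpha * _); apply: eq_bigr => k ki.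
  by rewrite !mxE (negbTE ki) /= mulr0 addr0.
have d_arg : is_derive (0 : R) 1 (fun t : R => (x i 0 + t) / alpha) alpha^-1.
  have := is_deriveM
    (is_deriveD (is_derive_cst (x i 0) (0 : R) 1) (is_derive_id (0 : R) 1))
    (is_derive_cst alpha^-1 (0 : R) 1).
  move/is_derive_eq => /(_ alpha^-1); apply.
  by rewrite scaler0 !add0r; apply: mulr1.
have d_H : is_derive ((fun t : R => (x i 0 + t) / alpha) 0) 1 H
                     (hder H (x i 0 / alpha)).
  by rewrite addr0 /hder derive1E; apply/derivableP/H_derivable/divr_gt0.
have d_comp :=
  @is_derive1_comp R H (fun t => (x i 0 + t) / alpha) 0 _ _ d_H d_arg.
have := is_deriveD (is_deriveZ alpha d_comp)
                   (is_derive_cst (alpha * C) (0 : R) 1).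
move/is_derive_eq => /(_ (hder H (x i 0 / alpha))) d_V.
rewrite derive1E; apply/derive_val/d_V.
by rewrite addr0 [_ *: _]mulrC divfK ?gt_eqF.
Qed.

Section ConsensusGradientFlow.
Variables (R : realType) (n : nat) (e : rel 'I_n) (w : 'I_n -> 'I_n -> R).
Variables (H : R -> R) (alpha : R).
Hypothesis e_irr : forall i, ~~ e i i.
Hypothesis w_gt0 : forall i j, e i j -> 0 < w i j.
Hypothesis alpha_gt0 : 0 < alpha.
Hypothesis H_derivable : forall a : R, 0 < a -> derivable H a 1.
Hypothesis H'_derivable : forall a : R, 0 < a -> derivable (derive1 H) a 1.
Hypothesis H''_continuous : forall a : R, 0 < a -> {for a, continuous (H2 H)}.
Hypothesis H''_gt0 : forall a : R, 0 < a -> 0 < H2 H a.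

Definition Ginv_weight (x : 'cV[R]_n) i k :=
  alpha * w i k * Kh H (x i 0 / alpha) (x k 0 / alpha).

Lemma GinvE x : Ginv e w H alpha x = lapmx e (Ginv_weight x).
Proof. by []. Qed.

Lemma laplacianE : laplacian e w = lapmx e w.
Proof. by []. Qed.

Lemma laplacian_mul_Ginv_gradV (x : 'cV[R]_n) :
  (forall i, 0 < x i 0) ->
  laplacian e w *m x = Ginv e w H alpha x *m gradV H alpha x.
Proof.
move=> x_gt0; apply/matrixP => i j; rewrite (ord1 j) laplacianE GinvE.
rewrite !lapmx_mulE //; apply: eq_bigr => k _; rewrite /edge_weight.
case: ifP => eik; last by rewrite !mul0r.
rewrite !gradVE // /Ginv_weight -mulrA Kh_mul_hderB ?divr_gt0 //.
by rewrite -mulrBl (mulrC alpha) -mulrA [alpha * _]mulrC divfK ?gt_eqF.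
Qed.

Lemma Ginv_weight_gt0 (x : 'cV[R]_n) i k :
  (forall i, 0 < x i 0) -> e i k -> 0 < Ginv_weight x i k.
Proof.
move=> x_gt0 eik; rewrite !mulr_gt0 ?w_gt0 //.
by apply: Kh_gt0; rewrite ?divr_gt0.
Qed.

Lemma Ginv_weight_continuous (x : 'cV[R]_n) i k : (forall i, 0 < x i 0) ->
  {for x, continuous (fun y => Ginv_weight y i k)}.
Proof.
move=> x_gt0; have coord_cvg l : (fun y : 'cV[R]_n => y l 0 / alpha) @ x
                                  --> x l 0 / alpha.
  exact: cvgM (@coord_continuous R n 1 l 0 x) (cvg_cst _).
have K_cvg : (fun y : 'cV[R]_n => Kh H (y i 0 / alpha) (y k 0 / alpha)) @ x
              --> Kh H (x i 0 / alpha) (x k 0 / alpha).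
  exact: (Kh_cvg H'_derivable H''_continuous H''_gt0 (FF := nbhs_filter x)
    (divr_gt0 (x_gt0 i) alpha_gt0) (divr_gt0 (x_gt0 k) alpha_gt0)
    (coord_cvg i) (coord_cvg k)).
exact: cvgM (cvg_cst (alpha * w i k)) K_cvg.
Qed.

Lemma Ginv_continuous (i j : 'I_n) :
  {within @Mset R n alpha, continuous (fun x => Ginv e w H alpha x i j)}.
Proof.
apply: continuous_in_subspaceT => x; rewrite inE => -[x_gt0 _].
rewrite /continuous_at [X in _ --> X]mxE; under eq_cvg do rewrite mxE.
case: (i == j); last case: (e i j).
- apply: (@cvg_big _ _ +%R 0 (e i) add_continuous _ (nbhs x) _
    (fun k y => Ginv_weight y i k) (fun k => Ginv_weight x i k) (nbhs_filter x))
    => k _.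
  exact: Ginv_weight_continuous.
- exact: cvgN (Ginv_weight_continuous x_gt0).
- exact: (@cvg_cst _ 0 _ _ (nbhs_filter x)).
Qed.

End ConsensusGradientFlow.

Unset Implicit Arguments.

Theorem theorem2 (R : realType) (n : nat) (e : rel 'I_n)
  (w : 'I_n -> 'I_n -> R) (H : R -> R) (alpha : R) :
  (* simple undirected connected graph *)
  (forall i j, e i j = e j i) ->
  (forall i, ~~ e i i) ->
  (forall i j, connect e i j) ->
  (* symmetric positive weights *)
  (forall i j, w i j = w j i) ->
  (forall i j, e i j -> 0 < w i j) ->
  0 < alpha ->
  (* H is C^2 on (0,oo) with H'' > 0 *)
  (forall a : R, 0 < a -> derivable H a 1) ->
  (forall a : R, 0 < a -> derivable (derive1 H) a 1) ->
  (forall a : R, 0 < a -> {for a, continuous (H2 H)}) ->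
  (forall a : R, 0 < a -> 0 < H2 H a) ->
  (forall x, x \in @Mset R n alpha ->
     let G := Ginv e w H alpha x in
     G^T = G /\
     (forall v : 'cV[R]_n, 0 <= (v^T *m G *m v) 0 0) /\
     (forall v : 'cV[R]_n, G *m v = 0 <-> exists c : R, v = c *: const_mx 1) /\
     - (laplacian e w *m x) = - (G *m gradV H alpha x)) /\
  (forall i j, {within @Mset R n alpha, continuous (fun x => Ginv e w H alpha x i j)}).
Proof.
move=> e_sym e_irr e_conn w_sym w_gt0 alpha_gt0 H_der H'_der H''_cont H''_gt0.
split; last by move=> i j; apply: Ginv_continuous.
move=> x; rewrite inE => -[x_gt0 _] /=; rewrite GinvE.
have c_sym i k : Ginv_weight w H alpha x i k = Ginv_weight w H alpha x k i.
  by rewrite /Ginv_weight w_sym Kh_sym.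
have c_gt0 := Ginv_weight_gt0 w_gt0 alpha_gt0 H'_der H''_gt0 x_gt0.
split; first exact: trmx_lapmx.
split; first by move=> v; apply: lapmx_psd.
split; first by move=> v; apply: lapmx_ker.
by rewrite -GinvE
  (laplacian_mul_Ginv_gradV w e_irr alpha_gt0 H_der H'_der H''_gt0 x_gt0).
Qed.
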